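(* Let $P$ be any program of the imperative language described in the context (a sequential composition of commands over the variables $X_1,\dots,X_n$). Then there exist a unique $p\in\mathbb{N}$ and a unique $n\times n$ matrix $M$ with coefficients in $\{0,1,2\}^p\to\mathrm{mwp}^{\infty}$ such that $\vdash P : M$ is derivable in the deterministic flow calculus described in the context.
   Context: Language. Variables range over $X_1,\dots,X_n$ (a fixed finite set of program variables), and $b$ ranges over boolean expressions (left unspecified; they play no role in the analysis). Expressions are $e ::= X \mid X - Y \mid X + Y \mid X * Y$ (with $X,Y$ variables), and commands are $C ::= X = e \mid \texttt{if } b \texttt{ then } C \texttt{ else } C \mid \texttt{while } b \texttt{ do } \{C\} \mid \texttt{loop } X \{C\} \mid C;C$, where $\texttt{loop } X\{C\}$ means ''execute $C$ $X$ times'' and $C;C$ is sequential composition. A program is a series of commands composed sequentially. The semi-ring $\mathrm{mwp}^{\infty}$. Its carrier is $\{0,m,w,p,\infty\}$ totally ordered by $0<m<w<p<\infty$; addition is $\max$; multiplication is $\alpha\times\beta=0$ if $\alpha,\beta\neq\infty$ and one of them is $0$, and $\alpha\times\beta=\max(\alpha,\beta)$ otherwise (so $\infty\times 0=\infty$). The zero is $0$ and the unit is $m$. For a set $A$, $A\to\mathrm{mwp}^{\infty}$ denotes the semi-ring of functions $A\to\mathrm{mwp}^{\infty}$ with pointwise addition and multiplication; constants $\alpha\in\mathrm{mwp}^\infty$ are identified with constant functions. Matrices: $n\times n$ matrices over a semi-ring with componentwise sum $\oplus$, the usual matrix product $\otimes$, unit $\mathbf{1}$ (diagonal entries $m$,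 other entries $0$), and closure $M^*=\mathbf{1}\oplus M\oplus M^2\oplus\cdots$. For $\vec a\in\{0,1,2\}^p$ and a matrix $M$ with coefficients in $\{0,1,2\}^p\to\mathrm{mwp}^\infty$, $M[\vec a]$ is the matrix over $\mathrm{mwp}^\infty$ obtained by evaluating every coefficient at $\vec a$. For $i\in\{0,1,2\}$ and a choice index $k$, $\delta(i,k)$ is the function sending $\vec a$ to $m$ if $a_k=i$ and to $0$ otherwise. Vectors: $\{^{\alpha}_i\}$ is the column $n$-vector with $\alpha$ in row $i$ and $0$ elsewhere, and $\{^{\alpha}_i,^{\beta}_j\}=\{^{\alpha}_i\}\oplus\{^{\beta}_j\}$; $\mathbf{1}\xleftarrow{j}V$ is the unit matrix whose $j$-th column is replaced by $V$; $\{^{\alpha}_i\to j\}$ is the matrix with $\alpha$ at row $i$, column $j$ and $0$ elsewhere. Deterministic calculus (judgements $\vdash e:V$ and $\vdash C:M$). Each application of rule E$^{A}$ in the derivation of a program is assigned its own choice index $k\in\{1,\dots,p\}$ (distinct applications receive distinct indices, $p$ being the total number of such applications), and all coefficients are regarded as functions of $\vec a\in\{0,1,2\}^p$. (E$^{A}$) for $\star\in\{+,-\}$: $\vdash X_i\star X_j : \delta(0,k)\{^m_i,^p_j\}\oplus\delta(1,k)\{^p_i,^m_j\}\oplus\delta(2,k)\{^w_i,^w_j\}$, with $k$ the choice index of this application. (E$^{M}$) $\vdash X_i * X_j : \{^w_i,^w_j\}$. (E$^{S}$) $\vdash X_i : \{^m_i\}$. (A) from $\vdash e:V$ infer $\vdash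 X_j = e : \mathbf{1}\xleftarrow{j}V$. (C) from $\vdash C_1:M_1$ and $\vdash C_2:M_2$ infer $\vdash C_1;C_2 : M_1\otimes M_2$. (I) from $\vdash C_1:M_1$ and $\vdash C_2:M_2$ infer $\vdash \texttt{if } b \texttt{ then } C_1 \texttt{ else } C_2 : M_1\oplus M_2$. (L$^{\infty}$) from $\vdash C:M$ infer $\vdash \texttt{loop } X_l\{C\} : M^*\oplus\{^{\infty}_j\to j \mid M^*_{jj}\neq m\}\oplus\{^{p}_l\to j\mid \exists i,\ M^*_{ij}=p\}$. (W$^{\infty}$) from $\vdash C:M$ infer $\vdash \texttt{while } b \texttt{ do }\{C\} : M^*\oplus\{^{\infty}_j\to j \mid M^*_{jj}\neq m\}\oplus\{^{\infty}_i\to j\mid M^*_{ij}=p\}$. (In L$^\infty$ and W$^\infty$, the conditions on coefficients are understood pointwise, for each choice assignment.) *)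

From mathcomp Require Import all_boot all_algebra.
Set Implicit Arguments. Unset Strict Implicit. Unset Printing Implicit Defensive.

Inductive mwp := M0 | Mm | Mw | Mp | Minf.

Definition mwp_rank (x : mwp) : nat :=
  match x with M0 => 0 | Mm => 1 | Mw => 2 | Mp => 3 | Minf => 4 end.

Definition mwp_eqb (x y : mwp) : bool := mwp_rank x == mwp_rank y.

Definition mwp_add (x y : mwp) : mwp := if mwp_rank x <= mwp_rank y then y else x.

Definition mwp_mul (x y : mwp) : mwp :=
  if mwp_eqb x Minf || mwp_eqb y Minf then mwp_add x y
  else if mwp_eqb x M0 || mwp_eqb y M0 then M0
  else mwp_add x y.

Definition choice (p : nat) := {ffun 'I_p -> 'I_3}.
Definition coef (p : nat) := choice p -> mwp.

Definition cst (p : nat) (x : mwp) : coef p := fun _ => x.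
Definition cadd p (f g : coef p) : coef p := fun a => mwp_add (f a) (g a).
Definition cmul p (f g : coef p) : coef p := fun a => mwp_mul (f a) (g a).

(* delta(i,k): a |-> m if a_k = i, 0 otherwise (choice indices are 0-based) *)
Definition delta p (i : 'I_3) (k : nat) : coef p :=
  fun a => if [exists k' : 'I_p, (val k' == k) && (a k' == i)] then Mm else M0.

Definition ch0 : 'I_3 := @Ordinal 3 0 isT.
Definition ch1 : 'I_3 := @Ordinal 3 1 isT.
Definition ch2 : 'I_3 := @Ordinal 3 2 isT.

Definition mx (n p : nat) := 'M[coef p]_n.
Definition vec (n p : nat) := 'I_n -> coef p.

Definition mxadd n p (A B : mx n p) : mx n p := (\matrix_(i, j) cadd (A i j) (B i j))%R.
Definition mxmul n p (A B : mx n p) : mx n p :=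
  (\matrix_(i, j) \big[@cadd p / @cst p M0]_(k < n) cmul (A i k) (B k j))%R.
Definition mx1 n p : mx n p := (\matrix_(i, j) @cst p (if i == j then Mm else M0))%R.
Definition mxpow n p (A : mx n p) (k : nat) : mx n p := iter k (mxmul A) (@mx1 n p).

(* S = A^* = 1 (+) A (+) A^2 (+) ... : the sum being max in a finite chain,
   S is, pointwise, the maximum of the entries of all powers A^k *)
Definition is_star n p (A S : mx n p) : Prop :=
  forall i j a,
    (forall k, mwp_rank (mxpow A k i j a) <= mwp_rank (S i j a)) /\
    (exists k, mxpow A k i j a = S i j a).

Definition vsing (n p : nat) (i : 'I_n) (x : mwp) : vec n p :=
  fun r => @cst p (if r == i then x else M0).
Definition vadd n p (u v : vec n p) : vec n p := fun r => cadd (u r) (v r).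
Definition vscale n p (c : coef p) (v : vec n p) : vec n p := fun r => cmul c (v r).

Definition col_replace n p (j : 'I_n) (V : vec n p) : mx n p :=
  (\matrix_(r, c) if c == j then V r else @mx1 n p r c)%R.

(* conclusion of rule L^infty, from S = M^* *)
Definition loopmx n p (l : 'I_n) (S : mx n p) : mx n p :=
  (\matrix_(r, c) fun a =>
    mwp_add (S r c a)
      (mwp_add (if (r == c) && ~~ mwp_eqb (S c c a) Mm then Minf else M0)
               (if (r == l) && [exists i, mwp_eqb (S i c a) Mp] then Mp else M0)))%R.

(* conclusion of rule W^infty, from S = M^* *)
Definition whilemx n p (S : mx n p) : mx n p :=
  (\matrix_(r, c) fun a =>
    mwp_add (S r c a)
      (mwp_add (if (r == c) && ~~ mwp_eqb (S c c a) Mm then Minf else M0)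
               (if mwp_eqb (S r c a) Mp then Minf else M0)))%R.

Inductive expr (n : nat) :=
| EVar of 'I_n
| ESub of 'I_n & 'I_n
| EAdd of 'I_n & 'I_n
| EMul of 'I_n & 'I_n.

(* B : type of (unspecified) boolean expressions *)
Inductive cmd (B : Type) (n : nat) :=
| Assign of 'I_n & expr n
| If of B & cmd B n & cmd B n
| While of B & cmd B n
| Loop of 'I_n & cmd B n
| Seq of cmd B n & cmd B n.

(* ---------- The deterministic calculus ----------
   dexp p k e k' V : |- e : V, where the E^A applications inside use choice
   indices k, k+1, ..., k'-1 (in left-to-right order). *)
Definition vEA n p (k : nat) (i j : 'I_n) : vec n p :=
  vadd (vscale (@delta p ch0 k) (vadd (vsing i Mm) (vsing j Mp)))
  (vadd (vscale (@delta p ch1 k) (vadd (vsing i Mp) (vsing j Mm)))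
        (vscale (@delta p ch2 k) (vadd (vsing i Mw) (vsing j Mw)))).

Inductive dexp (n p : nat) : nat -> expr n -> nat -> vec n p -> Prop :=
| dE_sub k i j : dexp k (ESub i j) k.+1 (@vEA _ p k i j)
| dE_add k i j : dexp k (EAdd i j) k.+1 (@vEA _ p k i j)
| dE_mul k i j : dexp k (EMul i j) k (vadd (@vsing _ p i Mw) (@vsing _ p j Mw))
| dE_var k i : dexp k (EVar i) k (@vsing _ p i Mm).

Inductive dcmd (B : Type) (n p : nat) : nat -> cmd B n -> nat -> mx n p -> Prop :=
| dA k k' j e V : dexp k e k' V -> dcmd k (Assign B j e) k' (col_replace j V)
| dC k k1 k2 c1 c2 M1 M2 :
    dcmd k c1 k1 M1 -> dcmd k1 c2 k2 M2 -> dcmd k (Seq c1 c2) k2 (mxmul M1 M2)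
| dI k k1 k2 b c1 c2 M1 M2 :
    dcmd k c1 k1 M1 -> dcmd k1 c2 k2 M2 -> dcmd k (If b c1 c2) k2 (mxadd M1 M2)
| dL k k' l c M S :
    dcmd k c k' M -> is_star M S -> dcmd k (Loop l c) k' (loopmx l S)
| dW k k' b c M S :
    dcmd k c k' M -> is_star M S -> dcmd k (While b c) k' (whilemx S).

(* |- P : M with p choice indices in total, numbered 0..p-1 *)
Definition derivable (B : Type) (n p : nat) (P : cmd B n) (M : mx n p) : Prop :=
  @dcmd B n p 0 P p M.

(** The deterministic calculus is syntax-directed: every command is the
    conclusion of exactly one rule, whose premises concern its immediate
    subcommands.  The choice indices used by a derivation are therefore
    forced (one per [+] or [-] expression, numbered left to right), and the
    only remaining freedom, the closure [M^*] in the loop rules, is determined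
    too: since [mwp] is a finite chain, the pointwise maximum of the powers
    of [M] is attained and unique.  Hence [|- P : M] holds exactly when [p] is
    the number of [+]/[-] expressions of [P] and [M] is the matrix computed by
    structural recursion on [P]. *)

From Pilot Require Import Defs.
From Stdlib Require Import Classical_Prop ClassicalEpsilon FunctionalExtensionality.
From mathcomp Require Import all_boot all_algebra.
Set Implicit Arguments.

Lemma mwp_rank_inj : injective mwp_rank.
Proof. by case; case. Qed.

Lemma bounded_ex_argmax (f : nat -> nat) (b : nat) :
  (forall k, f k <= b) -> exists k, forall k', f k' <= f k.
Proof.
elim: b => [|b IHb] fb; first by exists 0 => k'; rewrite (leq_trans (fb k')).
have [[k fk]|no_max] := classic (exists k, f k = b.+1).
  by exists k => k'; rewrite fk fb.
apply: IHb => k; rewrite -ltnS ltn_neqAle fb andbT.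
by apply/eqP => fk; apply: no_max; exists k.
Qed.

Section Star.

Variables n p : nat.
Implicit Types A S : mx n p.

Lemma exists_star A : exists S, is_star A S.
Proof.
have argmax (i j : 'I_n) (a : Defs.choice p) :
    {k | forall k', mwp_rank (mxpow A k' i j a) <= mwp_rank (mxpow A k i j a)}.
  apply: constructive_indefinite_description.
  by apply: (@bounded_ex_argmax _ 4) => k; case: (mxpow A k i j a).
exists (\matrix_(i, j) fun a => mxpow A (sval (argmax i j a)) i j a)%R.
by move=> i j a; rewrite mxE; split; [exact: svalP (argmax i j a) | eexists].
Qed.

Definition star A : mx n p :=
  sval (constructive_indefinite_description _ (exists_star A)).

Lemma is_star_uniq A S S' : is_star A S -> is_star A S' -> S = S'.
Proof.
move=> starS starS'; apply/matrixP => i j; apply: functional_extensionality => a.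
have [leS [k eS]] := starS i j a; have [leS' [k' eS']] := starS' i j a.
by apply: mwp_rank_inj; apply/eqP; rewrite eqn_leq -{1}eS leS' -{1}eS' leS.
Qed.

Lemma is_starE A S : is_star A S <-> S = star A.
Proof.
have starA : is_star A (star A) by apply: svalP.
by split=> [/is_star_uniq/(_ starA) | ->].
Qed.

End Star.

Section Derivations.

Variables (B : Type) (n p : nat).

Definition expr_choices (e : expr n) : nat :=
  match e with ESub _ _ | EAdd _ _ => 1 | _ => 0 end.

Fixpoint cmd_choices (c : cmd B n) : nat :=
  match c with
  | Assign _ e => expr_choices e
  | If _ c1 c2 | Seq c1 c2 => cmd_choices c1 + cmd_choices c2
  | While _ c | Loop _ c => cmd_choices c
  end.

Definition expr_vec (k : nat) (e : expr n) : vec n p :=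
  match e with
  | EVar i => vsing i Mm
  | ESub i j | EAdd i j => vEA k i j
  | EMul i j => vadd (vsing i Mw) (vsing j Mw)
  end.

Fixpoint cmd_mx (k : nat) (c : cmd B n) : mx n p :=
  match c with
  | Assign j e => col_replace j (expr_vec k e)
  | If _ c1 c2 => mxadd (cmd_mx k c1) (cmd_mx (k + cmd_choices c1) c2)
  | While _ c => whilemx (star (cmd_mx k c))
  | Loop l c => loopmx l (star (cmd_mx k c))
  | Seq c1 c2 => mxmul (cmd_mx k c1) (cmd_mx (k + cmd_choices c1) c2)
  end.

Lemma dexpP k e k' (V : vec n p) :
  dexp k e k' V <-> k' = k + expr_choices e /\ V = expr_vec k e.
Proof.
split=> [[] * | [-> ->]]; rewrite /= ?addn0 ?addn1 //.
by case: e => * /=; rewrite ?addn0 ?addn1; constructor.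
Qed.

Lemma dcmdP k c k' (M : mx n p) :
  dcmd k c k' M <-> k' = k + cmd_choices c /\ M = cmd_mx k c.
Proof.
split=> [|[-> ->]].
  elim=> {k c k' M} /=.
  - by move=> k k' j e V /dexpP[-> ->].
  - by move=> k k1 k2 c1 c2 M1 M2 _ [-> ->] _ [-> ->]; rewrite addnA.
  - by move=> k k1 k2 b c1 c2 M1 M2 _ [-> ->] _ [-> ->]; rewrite addnA.
  - by move=> k k' l c M S _ [-> ->] /is_starE ->.
  - by move=> k k' b c M S _ [-> ->] /is_starE ->.
elim: c k => [j e|b c1 IH1 c2 IH2|b c IH|l c IH|c1 IH1 c2 IH2] k /=.
- by constructor; apply/dexpP.
- by rewrite addnA; apply: dI.
- by apply: dW (IH k) _; apply/is_starE.
- by apply: dL (IH k) _; apply/is_starE.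
- by rewrite addnA; apply: dC.
Qed.

End Derivations.

Theorem theorem9 (B : Type) (n : nat) (P : cmd B n) :
  exists (p : nat) (M : mx n p),
    derivable P M /\
    (forall (p' : nat) (M' : mx n p'), derivable P M' -> p' = p) /\
    (forall M' : mx n p, derivable P M' -> M' = M).
Proof.
exists (cmd_choices P), (cmd_mx (cmd_choices P) 0 P).
split; first exact/dcmdP.
by split=> [p' M' | M'] /dcmdP[].
Qed.
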